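(* Let $M,H,\overline N\in\mathbb{N}$ with $\overline N\ge H\ge M\ge1$, and let $N(k):=\overline N-(k\bmod M)$ for $k\in\mathbb{N}_0$. Let $\bar k\in\mathbb{N}_0$ and let $(\bar\gamma(k))_{k=0}^{\bar k-1}\subseteq\{0,1\}$ with $\bar\gamma(0)=1$, and define $s(0):=0$, $s(k+1):=0$ if $\bar\gamma(k)=1$ and $s(k+1):=s(k)+1$ if $\bar\gamma(k)=0$. Suppose that for every $k\in\{0,\dots,\bar k-1\}$ there is a schedule $\sigma_k\in\Gamma^H_{N(k)}(s(k))$ with $\sigma_k(0)=\bar\gamma(k)$. Then for every $k\in\{0,\dots,\bar k-H\}$ it holds that $\sum_{i=k}^{k+H-1}\bar\gamma(i)\ge1$.
   Context: For $N,H\in\mathbb{N}$ and $s\in\mathbb{N}_0$, $\Gamma^H_N(s)$ denotes the set of schedules $\sigma=(\sigma(0),\dots,\sigma(N-1))\in\{0,1\}^N$ such that either $N\le H-s-1$, or $\sigma$ contains at least one entry equal to $1$ and, writing $\tau_0<\tau_1<\dots<\tau_{n-1}$ for the indices $j$ with $\sigma(j)=1$, it holds that $\tau_0\le H-s-1$, $\tau_{j+1}-\tau_j\le H$ for all $j\in\{0,\dots,n-2\}$, and $N-\tau_{n-1}\le H-1$. *)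

From mathcomp Require Import all_boot.
Set Implicit Arguments. Unset Strict Implicit. Unset Printing Implicit Defensive.

(* A schedule of length N is a function sigma : nat -> bool, of which only the
   entries sigma 0, ..., sigma (N-1) are relevant. *)

(* Gamma^H_N(s): membership of sigma.  Indices tau with sigma tau = true,
   tau < N, listed increasingly tau_0 < ... < tau_{n-1}. *)
Definition in_Gamma (H N s : nat) (sigma : nat -> bool) : Prop :=
  (* N <= H - s - 1 (integer arithmetic) *)
  (N + s + 1 <= H) \/
  ( (exists j, j < N /\ sigma j)
    /\ (* tau_0 <= H - s - 1 *)
       (forall t, t < N -> sigma t -> (forall j, j < t -> ~~ sigma j) ->
           t + s + 1 <= H)
    /\ (* consecutive ones: tau_{j+1} - tau_j <= H *)
       (forall t1 t2, t1 < t2 -> t2 < N -> sigma t1 -> sigma t2 ->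
           (forall j, t1 < j < t2 -> ~~ sigma j) -> t2 - t1 <= H)
    /\ (* N - tau_{n-1} <= H - 1 *)
       (forall t, t < N -> sigma t -> (forall j, t < j < N -> ~~ sigma j) ->
           N - t + 1 <= H) ).

Fixpoint sfun (gamma : nat -> bool) (k : nat) : nat :=
  match k with
  | 0 => 0
  | k'.+1 => if gamma k' then 0 else (sfun gamma k').+1
  end.

Definition Nk (Nbar M k : nat) : nat := Nbar - (k %% M).

From mathcomp Require Import all_boot.
From mathcomp Require Import zify.

(* Suppose some window gamma(k), ..., gamma(k+H-1) of length H
   contains no 1.  Then along the window the counter s only increases, so at
   its last index j = k+H-1 we have s(j) >= H-1 (lemma [sfun_idle_run]).
   The schedule sigma_j starts with sigma_j(0) = gamma(j) = 0 and has positive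
   length N(j) >= 1 (lemma [Nk_gt0]); for such a schedule, membership in
   Gamma^H_N(s) forces s <= H-2, because either N <= H-s-1 directly, or the
   first 1 of sigma_j occurs at some tau_0 >= 1 with tau_0 <= H-s-1 (lemma
   [in_Gamma_idle_head]).  The two bounds on s(j) contradict each other. *)

Lemma sum_window_eq0 (gamma : nat -> bool) (k n : nat) :
  \sum_(k <= i < k + n) (gamma i : nat) = 0 ->
  forall i, k <= i < k + n -> ~~ gamma i.
Proof.
move=> /eqP; rewrite sum_nat_seq_eq0 => /allP zero_terms i i_in.
by have := zero_terms i; rewrite mem_index_iota i_in /= eqb0 => ->.
Qed.

Lemma sfun_idle_run (gamma : nat -> bool) (k n : nat) :
  (forall i, k <= i < k + n -> ~~ gamma i) -> n <= sfun gamma (k + n).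
Proof.
elim: n => [//|n IHn] idle.
have gamma_last : gamma (k + n) = false by apply/negbTE/idle; lia.
have run : n <= sfun gamma (k + n) by apply: IHn => i Hi; apply: idle; lia.
by rewrite addnS /= gamma_last.
Qed.

Lemma Nk_gt0 (Nbar M k : nat) : 0 < M -> M <= Nbar -> 0 < Nk Nbar M k.
Proof. by move=> M_gt0 M_le; have := ltn_pmod k M_gt0; rewrite /Nk; lia. Qed.

(* A nonempty schedule in Gamma^H_N(s) that starts with 0 forces s <= H - 2:
   its first 1, if any, sits at an index tau_0 >= 1 with tau_0 <= H - s - 1. *)
Lemma in_Gamma_idle_head {H N s : nat} {sigma : nat -> bool} :
  0 < N -> sigma 0 = false -> in_Gamma H N s sigma -> s.+2 <= H.
Proof.
move=> N_gt0 sigma0 [short | [[j [j_lt sigma_j]] [first_one _]]]; first lia.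
have has_one : exists j, (j < N) && sigma j by exists j; rewrite j_lt sigma_j.
case: (ex_minnP has_one) => t /andP [t_lt sigma_t] t_min.
have t_gt0 : 0 < t by case: t sigma_t {t_lt t_min} => [|//]; rewrite sigma0.
suff : t + s + 1 <= H by lia.
apply: first_one => // i i_lt; apply/negP => sigma_i.
by have := t_min i; rewrite sigma_i andbT (ltn_trans i_lt t_lt) => /(_ isT); lia.
Qed.

Theorem lemma6 (M H Nbar kbar : nat) (gamma : nat -> bool) :
  1 <= M -> M <= H -> H <= Nbar ->
  (0 < kbar -> gamma 0 = true) ->
  (forall k, k < kbar ->
     exists sigma : nat -> bool,
       in_Gamma H (Nk Nbar M k) (sfun gamma k) sigma /\ sigma 0 = gamma k) ->
  forall k, k + H <= kbar ->
    1 <= \sum_(k <= i < k + H) (gamma i : nat).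
Proof.
move=> M_gt0 M_le_H H_le_Nbar _ schedules k window_in.
rewrite lt0n; apply/eqP => /sum_window_eq0 idle.
pose j := k + H.-1.
have s_large : H.-1 <= sfun gamma j.
  by apply: sfun_idle_run => i Hi; apply: idle; lia.
have [sigma [sigma_in sigma0]] := schedules j ltac:(lia).
have gamma_j : gamma j = false by apply/negbTE/idle; lia.
have N_gt0 : 0 < Nk Nbar M j by apply: Nk_gt0; lia.
have := in_Gamma_idle_head N_gt0 (etrans sigma0 gamma_j) sigma_in.
lia.
Qed.
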